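(* Let $\mathcal B$ be a BMC with $\mathbf c^*_q<\infty$ for all $q\in\mathcal T$, and consider the Q-learning process with learning rates $\lambda_i\in[0,1]$, a fixed selection distribution $(p_q)_{q\in\mathcal T}$, and initial value $Q_0=\kappa\mathbf c^*$ for a scalar $\kappa\in[0,1]$. Then for all $i\in\mathbb N$, $\mathbf c^*\ge T(\mathbb E Q_i)\ge \mathbb E Q_{i+1}\ge\mathbb E Q_i$.
   Context: A branching Markov chain (BMC) is $\mathcal B=(\mathcal T,p,c)$ with $\mathcal T$ a finite set of types, $p(q)$ for each $q\in\mathcal T$ a probability distribution with finite support over finite lists $\mathcal T^*$ of types (the offspring distribution), and $c:\mathcal T\to\mathbb R_{>0}$ a strictly positive cost. (It is a BMDP with one action per type.) For a list $\alpha$, $|\alpha|$ is its length and $\alpha_i$ its $i$-th element. Its process: a list of entities; repeatedly some entity of type $q$ is replaced by a list $\beta$ drawn from $p(q)$, incurring cost $c(q)$, until the list is empty. $\mathbf c^*_q\in[0,\infty]$ denotes the expected total cost until extinction starting from the single entity $q$; equivalently $\mathbf c^*$ is the least fixed point in $[0,\infty]^{\mathcal T}$ of $F(\mathbf x)_q=c(q)+\sum_\alpha p(q)(\alpha)\sum_{i=1}^{|\alpha|}\mathbf x_{\alpha_i}$. Q-values for a BMC are vectors $Q\in\mathbb R_{\ge0}^{\mathcal T}$. The target operator is $T(Q)(q)=c(q)+\sum_{\alpha\in\mathcal T^*}p(q)(\alpha)\sum_{j=1}^{|\alpha|}Q(\alpha_j)$ (an affine map $T(Q)=BQ+\mathbf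 c$ with $B$ a nonnegative matrix). Q-learning process: given deterministic learning rates $\lambda_i\in[0,1]$, a probability distribution $(p_q)_{q\in\mathcal T}$ and an initial vector $Q_0\ge\mathbf 0$, at each step $i=0,1,2,\dots$ a type $q_i$ is selected with probability $p_{q_i}$ independently of all previous randomness, then a list $\beta^i$ is drawn from $p(q_i)$ independently, and $Q_{i+1}(q_i)=(1-\lambda_i)Q_i(q_i)+\lambda_i\big(c(q_i)+\sum_{j=1}^{|\beta^i|}Q_i(\beta^i_j)\big)$, while $Q_{i+1}(q)=Q_i(q)$ for $q\ne q_i$. $\mathbb E Q_i$ is the componentwise expectation; inequalities between vectors are componentwise. *)

From HB Require Import structures.
From mathcomp Require Import all_boot all_order all_algebra.
From mathcomp Require Import reals constructive_ereal.
Set Implicit Arguments. Unset Strict Implicit. Unset Printing Implicit Defensive.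
Import Order.TTheory GRing.Theory Num.Theory.
Local Open Scope ring_scope.

Section BMC.
Variables (R : realType) (T : finType).

(* An offspring distribution with finite support over lists of types is
   represented as a finite list of weighted outcomes (weight, list). *)
Definition offspring_dist := seq (R * seq T).

Definition is_distr (d : offspring_dist) : Prop :=
  (forall a, a \in d -> 0 <= a.1) /\ \sum_(a <- d) a.1 = 1.

Definition is_BMC (p : T -> offspring_dist) (c : T -> R) : Prop :=
  (forall q, is_distr (p q)) /\ (forall q, 0 < c q).

Definition Fbar (p : T -> offspring_dist) (c : T -> R) (x : T -> \bar R)
  : T -> \bar R :=
  fun q => ((c q)%:E + \sum_(a <- p q) (a.1)%:E * \sum_(y <- a.2) x y)%E.

(* cs (a real, hence finite, vector) is the least fixed point of F in
   [0,oo]^T, i.e. cs = c* and c*_q < oo for all q. *)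
Definition is_cstar (p : T -> offspring_dist) (c : T -> R) (cs : T -> R)
  : Prop :=
  (forall q, 0 <= cs q) /\
  Fbar p c (fun q => (cs q)%:E) = (fun q => (cs q)%:E) /\
  (forall x : T -> \bar R, (forall q, (0 <= x q)%E) -> Fbar p c x = x ->
     forall q, ((cs q)%:E <= x q)%E).

Definition Top (p : T -> offspring_dist) (c : T -> R) (Q : T -> R) : T -> R :=
  fun q => c q + \sum_(a <- p q) a.1 * \sum_(y <- a.2) Q y.

Definition Qupd (c : T -> R) (Q : T -> R) (q : T) (lam : R) (beta : seq T)
  : T -> R :=
  fun q' => if q' == q then (1 - lam) * Q q + lam * (c q + \sum_(y <- beta) Q y)
            else Q q'.

(* The law of Q_i, as a finitely supported distribution (list of
   (probability, value) pairs): at step i a type q is selected with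
   probability pq q, independently a list beta is drawn from p q. *)
Fixpoint Qlaw (p : T -> offspring_dist) (c : T -> R) (lam : nat -> R)
  (pq : T -> R) (Q0 : T -> R) (i : nat) : seq (R * (T -> R)) :=
  match i with
  | 0 => [:: (1, Q0)]
  | i'.+1 =>
      flatten [seq flatten [seq [seq (wQ.1 * pq q * b.1, Qupd c wQ.2 q (lam i') b.2)
                                | b <- p q] | q <- enum T]
              | wQ <- Qlaw p c lam pq Q0 i']
  end.

Definition EQ (p : T -> offspring_dist) (c : T -> R) (lam : nat -> R)
  (pq : T -> R) (Q0 : T -> R) (i : nat) : T -> R :=
  fun q => \sum_(wQ <- Qlaw p c lam pq Q0 i) wQ.1 * wQ.2 q.

End BMC.

From HB Require Import structures.
From mathcomp Require Import all_boot all_order all_algebra.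
From mathcomp Require Import reals constructive_ereal.
From mathcomp Require Import ring lra.
From Stdlib Require Import FunctionalExtensionality.
Import Order.TTheory GRing.Theory Num.Theory.
Local Open Scope ring_scope.

(* Taking expectations in the Q-learning update, the mean
   vector x_i := E Q_i evolves deterministically by a componentwise
   relaxation of the target operator:
       x_{i+1}(q) = x_i(q) + pq(q) lam_i (T(x_i)(q) - x_i(q)),
   because T is affine and the weights of the law of Q_i sum to one.
   T is monotone and has cs as a fixed point.  For any monotone operator
   with fixed point cs, a relaxed iteration with step weights in [0,1]
   started at a point x_0 with x_0 <= cs and x_0 <= T x_0 keeps the
   invariant  x_i <= x_{i+1} <= T x_i <= cs  (lemma relaxation_invariant).
   The start x_0 = kappa cs satisfies it since T(kappa cs) =
   (1 - kappa) c + kappa cs with c > 0.  The file proves the abstract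
   relaxation lemma, then the facts about T, then the mean recursion for
   the law Qlaw, and finally combines them. *)

Lemma interpolate_between {R : realDomainType} {a x y : R} :
  0 <= a <= 1 -> x <= y -> x <= x + a * (y - x) <= y.
Proof. by move=> /andP [a0 a1] xy; apply/andP; split; nra. Qed.

Section Relaxation.
Variables (R : realDomainType) (T : Type).
Variable F : (T -> R) -> T -> R.
Hypothesis F_mono :
  forall x y : T -> R, (forall t, x t <= y t) -> forall t, F x t <= F y t.
Variable xs : T -> R.
Hypothesis F_fix : forall t, F xs t = xs t.

Variables (x : nat -> T -> R) (w : nat -> T -> R).
Hypothesis w_unit : forall i t, 0 <= w i t <= 1.
Hypothesis x_step : forall i t, x i.+1 t = x i t + w i t * (F (x i) t - x i t).
Hypothesis x0_below : forall t, x 0 t <= xs t.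
Hypothesis x0_super : forall t, x 0 t <= F (x 0) t.

Lemma relaxation_chain i :
  (forall t, x i t <= xs t /\ x i t <= F (x i) t) ->
  forall t, x i t <= x i.+1 t <= F (x i) t /\ F (x i) t <= xs t.
Proof.
move=> inv t; split.
  by rewrite x_step; apply: interpolate_between; [exact: w_unit | case: (inv t)].
by rewrite -F_fix; apply: F_mono => u; case: (inv u).
Qed.

(* The invariant propagates: x_{i+1} <= F x_i <= xs, and F x_i <= F x_{i+1}
   by monotonicity since x_i <= x_{i+1}. *)
Lemma relaxation_inv i t : x i t <= xs t /\ x i t <= F (x i) t.
Proof.
elim: i t => [|i IH] t; first by split.
have chain := relaxation_chain i IH.
have [/andP [_ le_F] F_below] := chain t.
split; first exact: le_trans le_F F_below.
apply: le_trans le_F _; apply: F_mono => u.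
by case: (chain u) => /andP [].
Qed.

Lemma relaxation_invariant i t :
  x i t <= x i.+1 t /\ x i.+1 t <= F (x i) t /\ F (x i) t <= xs t.
Proof.
have [/andP [up down] below] := relaxation_chain i (relaxation_inv i) t.
by [].
Qed.

End Relaxation.

Section TargetOperator.
Variables (R : realType) (T : finType).
Variables (p : T -> offspring_dist R T) (c : T -> R).
Hypothesis p_distr : forall q, is_distr (p q).

(* T is monotone, since its linear part B has nonnegative entries. *)
Lemma Top_mono (Q Q' : T -> R) :
  (forall t, Q t <= Q' t) -> forall q, Top p c Q q <= Top p c Q' q.
Proof.
move=> le_QQ' q; rewrite /Top lerD2l !big_seq; apply: ler_sum => a a_in.
by apply: ler_wpM2l; [exact: (proj1 (p_distr q)) | apply: ler_sum].
Qed.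

(* T is affine, so it commutes with convex combinations. *)
Lemma Top_convex (W : seq (R * (T -> R))) q :
  \sum_(x <- W) x.1 = 1 ->
  \sum_(x <- W) x.1 * Top p c x.2 q =
  Top p c (fun t => \sum_(x <- W) x.1 * x.2 t) q.
Proof.
move=> W_mass; rewrite /Top.
under eq_bigr => x _ do rewrite mulrDr.
rewrite big_split /= -big_distrl /= W_mass mul1r; congr (_ + _).
under eq_bigr => x _ do rewrite big_distrr /=.
rewrite exchange_big /=; apply: eq_bigr => a _.
under eq_bigr => x _ do rewrite mulrCA.
rewrite -big_distrr /=; congr (_ * _).
under eq_bigr => x _ do rewrite big_distrr /=.
by rewrite exchange_big.
Qed.

Lemma Top_scale (k : R) (Q : T -> R) q :
  Top p c (fun t => k * Q t) q = (1 - k) * c q + k * Top p c Q q.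
Proof.
rewrite /Top.
under eq_bigr => a _ do rewrite -big_distrr /= mulrCA.
rewrite -big_distrr /=; ring.
Qed.

Lemma Top_cstar (cs : T -> R) : is_cstar p c cs -> forall q, Top p c cs q = cs q.
Proof.
move=> [_ [cs_fix _]] q; have := congr1 (fun f => f q) cs_fix; rewrite /Fbar /Top.
under eq_bigr => a _ do rewrite sumEFin -EFinM.
by rewrite sumEFin -EFinD; case.
Qed.

Lemma Qupd_mean (Q : T -> R) q q' l :
  \sum_(b <- p q) b.1 * Qupd c Q q l b.2 q' =
  Q q' + (q' == q)%:R * l * (Top p c Q q - Q q).
Proof.
have [_ mass1] := p_distr q.
rewrite /Qupd; case: eqP => [->|_].
  rewrite (eq_bigr (fun b => b.1 * ((1 - l) * Q q + l * c q)
                              + l * (b.1 * \sum_(y <- b.2) Q y))); last first.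
    by move=> b _; ring.
  rewrite big_split /= -big_distrl /= mass1 mul1r -big_distrr /= /Top.
  rewrite mul1r; ring.
under eq_bigr => b _ do rewrite mulrC.
by rewrite -big_distrr /= mass1 mulr1 mul0r mul0r addr0.
Qed.

End TargetOperator.

Lemma selection_mean (R : realType) (T : finType) (pq : T -> R)
    (X Q : T -> R) q' :
  \sum_(q : T) pq q = 1 ->
  \sum_(q <- enum T) pq q * (Q q' + (q' == q)%:R * X q) = Q q' + pq q' * X q'.
Proof.
move=> pq_mass.
under eq_bigr => j _ do rewrite mulrDr mulrCA.
rewrite big_split /= -big_distrl /= big_enum /= pq_mass mul1r; congr (_ + _).
rewrite big_enum /= (bigD1 q') //= eqxx mul1r big1 ?addr0 // => j /negbTE.
by rewrite eq_sym => ->; rewrite mul0r.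
Qed.

Section MeanDynamics.
Variables (R : realType) (T : finType).
Variables (p : T -> offspring_dist R T) (c : T -> R).
Variables (lam : nat -> R) (pq : T -> R) (Q0 : T -> R).
Hypothesis p_distr : forall q, is_distr (p q).
Hypothesis pq_mass : \sum_(q : T) pq q = 1.

Lemma Qlaw_mass i : \sum_(x <- Qlaw p c lam pq Q0 i) x.1 = 1.
Proof.
elim: i => [|i IH] /=; first by rewrite big_cons big_nil addr0.
rewrite big_flatten /= big_map -{}IH; apply: eq_bigr => x _.
rewrite big_flatten /= big_map.
under eq_bigr => q _ do rewrite big_map /=.
under eq_bigr => q _ do under eq_bigr => b _ do rewrite -mulrA.
under eq_bigr => q _ do rewrite -big_distrr /=.
rewrite -big_distrr /=.
under eq_bigr => q _ do rewrite -big_distrr /= (proj2 (p_distr q)) mulr1.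
by rewrite big_enum /= pq_mass mulr1.
Qed.

Lemma step_mean i (Q : T -> R) q' :
  \sum_(q <- enum T) \sum_(b <- p q) pq q * b.1 * Qupd c Q q (lam i) b.2 q' =
  Q q' + pq q' * lam i * (Top p c Q q' - Q q').
Proof.
transitivity (\sum_(q <- enum T)
    pq q * (Q q' + (q' == q)%:R * (lam i * (Top p c Q q - Q q)))).
  apply: eq_bigr => q _.
  under eq_bigr => b _ do rewrite -mulrA.
  by rewrite -big_distrr /= Qupd_mean // -mulrA.
by rewrite selection_mean // mulrA.
Qed.

Lemma EQ_step i q' :
  EQ p c lam pq Q0 i.+1 q' = EQ p c lam pq Q0 i q' +
    pq q' * lam i * (Top p c (EQ p c lam pq Q0 i) q' - EQ p c lam pq Q0 i q').
Proof.
set a := pq q' * lam i.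
rewrite /EQ /= big_flatten /= big_map.
rewrite (eq_bigr (fun x => (1 - a) * (x.1 * x.2 q') + a * (x.1 * Top p c x.2 q')));
  last first.
  move=> x _; rewrite big_flatten /= big_map.
  transitivity (x.1 * (x.2 q' + a * (Top p c x.2 q' - x.2 q'))); last by ring.
  rewrite -step_mean big_distrr /=; apply: eq_bigr => q _.
  by rewrite big_map big_distrr /=; apply: eq_bigr => b _; rewrite !mulrA.
by rewrite big_split /= -!big_distrr /= Top_convex ?Qlaw_mass //; ring.
Qed.

Lemma EQ0 : EQ p c lam pq Q0 0 = Q0.
Proof.
by apply: functional_extensionality => t; rewrite /EQ /= big_cons big_nil addr0 mul1r.
Qed.

End MeanDynamics.

Theorem lemma2 (R : realType) (T : finType)
  (p : T -> offspring_dist R T) (c : T -> R) (cs : T -> R)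
  (lam : nat -> R) (pq : T -> R) (kappa : R) :
  is_BMC p c ->
  is_cstar p c cs ->
  (forall i, 0 <= lam i <= 1) ->
  (forall q, 0 <= pq q) -> \sum_(q : T) pq q = 1 ->
  0 <= kappa <= 1 ->
  forall i : nat, forall q : T,
    let EQi := EQ p c lam pq (fun t => kappa * cs t) i in
    let EQi1 := EQ p c lam pq (fun t => kappa * cs t) i.+1 in
    Top p c EQi q <= cs q /\ EQi1 q <= Top p c EQi q /\ EQi q <= EQi1 q.
Proof.
move=> [p_distr c_pos] cs_least lam_unit pq_ge0 pq_mass /andP [k0 k1] i q EQi EQi1.
have cs_fix := @Top_cstar R T p c cs cs_least.
have cs_ge0 t : 0 <= cs t by case: cs_least.
have pq_le1 t : pq t <= 1.
  by rewrite -pq_mass (bigD1 t) //= lerDl; apply: sumr_ge0.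
have w_unit j t : 0 <= pq t * lam j <= 1.
  case/andP: (lam_unit j) => l0 l1; have := pq_ge0 t; have := pq_le1 t.
  by move=> ? ?; apply/andP; split; nra.
have start_below t : EQ p c lam pq (fun t => kappa * cs t) 0 t <= cs t.
  by rewrite EQ0; have := cs_ge0 t; nra.
have start_super t : EQ p c lam pq (fun t => kappa * cs t) 0 t <=
    Top p c (EQ p c lam pq (fun t => kappa * cs t) 0) t.
  by rewrite EQ0 Top_scale cs_fix; have := c_pos t; have := cs_ge0 t; nra.
have := @relaxation_invariant R T (Top p c) (@Top_mono R T p c p_distr)
  cs cs_fix (EQ p c lam pq (fun t => kappa * cs t)) (fun j t => pq t * lam j)
  w_unit (@EQ_step R T p c lam pq _ p_distr pq_mass) start_below start_super i q.
by move=> [up [down below]].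
Qed.
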